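(* Let $g\ge1$ be an integer, $A\ge1$ real, $\mathbf n\ge\mathbf 1_g$ in $\mathbb N^g$, and $f=\sum_{\mathbf k\ge\mathbf 0_g}f_{\mathbf k}\mathbf z^{\mathbf k}$ a power series of order of magnitude $(A,\mathbf n)$. Let $\mathbf c\in P(\mathbf 0_g,1)$ and let $F_{\mathbf c}(\mathbf y)=f(\mathbf c+\mathbf y\star(\mathbf 1_g-\|\mathbf c\|))$ be the series recentered at $\mathbf c$. Then $F_{\mathbf c}$ is a power series of order of magnitude $(A_{\mathbf c},\mathbf n+\mathbf 1_g)$ with $A_{\mathbf c}=\mathbf n!\,A\,\exp(g+|\mathbf n|_1)\,2^{g+|\mathbf n|_1}(\mathbf 1_g-\|\mathbf c\|)^{-\mathbf n-\mathbf 2_g}$.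
   Context: For $\mathbf x=(x_1,\dots,x_g)\in\mathbb C^g$: $|\mathbf x|_1=\sum|x_k|$, $\|\mathbf x\|=(|x_1|,\dots,|x_g|)$; $\mathbf x\star\mathbf y=(x_1y_1,\dots,x_gy_g)$; $\mathbf 0_g,\mathbf 1_g,\mathbf 2_g$ are the constant vectors; inequalities between vectors are componentwise; multi-index notation: $\mathbf x^{\mathbf k}=\prod x_m^{k_m}$, $\mathbf n!=\prod n_m!$. $P(\mathbf x,r)=\prod_kD(x_k,r)$ is the open polydisc. A series $f=\sum_{\mathbf k}f_{\mathbf k}\mathbf z^{\mathbf k}$ has order of magnitude $(A,\mathbf n)$ ($A\ge1$, $\mathbf n\ge\mathbf 1_g$) if $|f_{\mathbf k}|\le A(\mathbf k+\mathbf 1_g)^{\mathbf n}=A\prod_m(k_m+1)^{n_m}$ for all $\mathbf k$. *)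

From mathcomp Require Import all_boot all_order all_algebra.
From mathcomp Require Import all_classical all_reals all_analysis.
From mathcomp Require Export complex.
Set Implicit Arguments. Unset Strict Implicit. Unset Printing Implicit Defensive.
Import Order.TTheory GRing.Theory Num.Theory numFieldNormedType.Exports.
Local Open Scope ring_scope.
Local Open Scope classical_set_scope.
Notation normc := ComplexField.Normc.normc.

Definition mpow (R : realType) (g : nat) (x : 'I_g -> R[i]) (k : 'I_g -> nat) : R[i] :=
  \prod_(m < g) x m ^+ k m.

Definition mnorm1 (g : nat) (n : 'I_g -> nat) : nat := \sum_(m < g) n m.

Definition mfact (g : nat) (n : 'I_g -> nat) : nat := \prod_(m < g) (n m)`!.

Definition order_of_magnitude (R : realType) (g : nat) (f : ('I_g -> nat) -> R[i])
    (A : R) (n : 'I_g -> nat) : Prop :=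
  1 <= A /\ (forall m, (1 <= n m)%N) /\
  forall k : 'I_g -> nat,
    normc (f k) <= A * \prod_(m < g) ((k m).+1%:R) ^+ (n m).

Definition polydisc (R : realType) (g : nat) (x : 'I_g -> R[i]) (r : R)
    (z : 'I_g -> R[i]) : Prop :=
  forall m, normc (z m - x m) < r.

Definition box_psum (R : realType) (g : nat) (f : ('I_g -> nat) -> R[i])
    (z : 'I_g -> R[i]) (N : nat) : R[i] :=
  \sum_(k : {ffun 'I_g -> 'I_N}) f (fun m => nat_of_ord (k m)) *
                                 mpow z (fun m => nat_of_ord (k m)).

Definition pseries_sum (R : realType) (g : nat) (f : ('I_g -> nat) -> R[i])
    (z : 'I_g -> R[i]) (l : R[i]) : Prop :=
  forall e : R, 0 < e -> exists N0 : nat, forall N : nat, (N0 <= N)%N ->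
    normc (box_psum f z N - l) < e.

From mathcomp Require Import all_boot all_order all_algebra.
From mathcomp Require Import all_classical all_reals all_analysis.
From mathcomp Require Import complex.
From mathcomp Require Import lra zify ring.
Import Order.TTheory GRing.Theory Num.Theory numFieldNormedType.Exports.
Local Open Scope ring_scope.
Local Open Scope complex_scope.
Set Implicit Arguments.
Unset Strict Implicit.
Import ComplexField.Normc.

(* Put r_m = 1 - |c_m|.  Expanding (c_m + y_m r_m)^(k_m) binomially, the
   coefficient of y^j in F_c is the series over k of
   f_k prod_m C(k_m, j_m) c_m^(k_m - j_m) r_m^(j_m).  Since
   (k + 1)^n C(k, j) <= n! (j + 1)^n C(k + n, j + n) and the negative binomial
   series gives sum_k C(k, m) rho^(k - m) = (1 - rho)^-(m + 1), this series
   converges absolutely with |F_j| <= A prod_m n_m! (j_m + 1)^(n_m) r_m^-(n_m + 1),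
   which is below the claimed bound.  For |y_m| < 1 the double series over
   (k, j) is absolutely convergent, because summing |.| over j first leaves
   A prod_m sum_k (k + 1)^(n_m) q_m^k with q_m = |c_m| + r_m |y_m| < 1; so its
   two iterated sums agree, and they are f(c + y * r) and F_c(y).  All series
   are summed over square boxes [0, N)^g, as in [pseries_sum]. *)

Section ComplexNorm.
Variable R : realType.
Local Notation C := R[i].
Local Notation Re := (@complex.Re R).
Local Notation Im := (@complex.Im R).

(* [Rcomplex R] carries the [normedZmodType R] structure whose norm is [normc]. *)
Lemma normc_ge0 (x : C) : 0 <= normc x.
Proof. exact: (@normr_ge0 _ (Rcomplex R)). Qed.

Lemma normc_distC (x y : C) : normc (x - y) = normc (y - x).
Proof. exact: (@distrC _ (Rcomplex R)). Qed.

Lemma ler_normc_sum (I : Type) (r : seq I) (P : pred I) (F : I -> C) :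
  normc (\sum_(i <- r | P i) F i) <= \sum_(i <- r | P i) normc (F i).
Proof. exact: (@ler_norm_sum _ (Rcomplex R)). Qed.

Lemma normc_prod (I : Type) (r : seq I) (P : pred I) (F : I -> C) :
  normc (\prod_(i <- r | P i) F i) = \prod_(i <- r | P i) normc (F i).
Proof.
by elim/big_rec2: _ => [|i y1 y2 _ <-]; rewrite ?normc1 ?normcM.
Qed.

Lemma normcX (x : C) k : normc (x ^+ k) = normc x ^+ k.
Proof.
by elim: k => [|k IH]; rewrite ?expr0 ?normc1 // !exprS normcM IH.
Qed.

Lemma normc_mpow g (y : 'I_g -> C) (j : 'I_g -> nat) :
  normc (mpow y j) = \prod_(m < g) normc (y m) ^+ j m.
Proof. by rewrite normc_prod; apply: eq_bigr => m _; rewrite normcX. Qed.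

Lemma normc_real (x : R) : normc x%:C = `|x|.
Proof. by rewrite /= expr0n /= addr0 sqrtr_sqr. Qed.

Lemma normc_nat k : normc (k%:R : C) = k%:R.
Proof.
have -> : (k%:R : C) = (k%:R : R)%:C by rewrite rmorph_nat.
by rewrite normc_real ger0_norm.
Qed.

Lemma ler_normc_ReB (x y : C) : `|Re x - Re y| <= normc (x - y).
Proof.
case: x y => a b [c d] /=; rewrite -sqrtr_sqr ler_sqrt ?addr_ge0 ?sqr_ge0 //.
by rewrite lerDl sqr_ge0.
Qed.

Lemma ler_normc_ImB (x y : C) : `|Im x - Im y| <= normc (x - y).
Proof.
case: x y => a b [c d] /=; rewrite -sqrtr_sqr ler_sqrt ?addr_ge0 ?sqr_ge0 //.
by rewrite lerDr sqr_ge0.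
Qed.

End ComplexNorm.

Definition cvgc (R : realType) (u : nat -> R[i]) (l : R[i]) : Prop :=
  forall e : R, 0 < e -> exists N0 : nat, forall N : nat, (N0 <= N)%N ->
    normc (u N - l) < e.

Section ComplexConvergence.
Variable R : realType.
Local Notation C := R[i].
Local Notation Re := (@complex.Re R).
Local Notation Im := (@complex.Im R).
Implicit Types (u v : nat -> C) (l m : C).

Lemma cvgc_cst l : cvgc (fun _ => l) l.
Proof.
by move=> e e0; exists 0%N => N _; rewrite subrr normc0.
Qed.

Lemma cvgcD u v l m : cvgc u l -> cvgc v m -> cvgc (fun N => u N + v N) (l + m).
Proof.
move=> ul vm e e0; have e2 : 0 < e / 2 by rewrite divr_gt0.
have [N1 h1] := ul _ e2; have [N2 h2] := vm _ e2.
exists (maxn N1 N2) => N; rewrite geq_max => /andP[N1N N2N].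
rewrite opprD addrACA (splitr e); apply: le_lt_trans (le_normcD _ _) _.
by apply: ltrD; [apply: h1 | apply: h2].
Qed.

Lemma cvgcMl w u l : cvgc u l -> cvgc (fun N => w * u N) (w * l).
Proof.
move=> ul e e0; have w0 : 0 < normc w + 1 by rewrite ltr_wpDl ?normc_ge0.
have [N0 h0] := ul _ (divr_gt0 e0 w0).
exists N0 => N N0N; rewrite -mulrBr normcM.
apply: le_lt_trans (_ : (normc w + 1) * normc (u N - l) < e).
  by rewrite ler_wpM2r ?normc_ge0 // lerDl.
by rewrite mulrC -ltr_pdivlMr //; apply: h0.
Qed.

Lemma cvgcB u v l m : cvgc u l -> cvgc v m -> cvgc (fun N => u N - v N) (l - m).
Proof.
move=> ul /(cvgcMl (-1)); rewrite mulN1r.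
by under eq_fun do rewrite mulN1r; apply: cvgcD.
Qed.

Lemma cvgc_sum (I : Type) (r : seq I) (u : I -> nat -> C) (l : I -> C) :
  (forall i, cvgc (u i) (l i)) ->
  cvgc (fun N => \sum_(i <- r) u i N) (\sum_(i <- r) l i).
Proof.
move=> ul; elim: r => [|i r IH].
  by under eq_fun do rewrite big_nil; rewrite big_nil; apply: cvgc_cst.
by under eq_fun do rewrite big_cons; rewrite big_cons; apply: cvgcD.
Qed.

Lemma cvgc_le u l x b N0 :
  cvgc u l -> (forall N, (N0 <= N)%N -> normc (u N - x) <= b) -> normc (l - x) <= b.
Proof.
move=> ul ub; apply/ler_addgt0Pr => e e0.
have [N1 h1] := ul e e0; set N := maxn N0 N1.
rewrite -(subrK (u N) l) -addrA addrC.
apply: le_trans (le_normcD _ _) _; apply: lerD; first exact/ub/leq_maxl.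
by rewrite normc_distC ltW // h1 ?leq_maxr.
Qed.

Lemma exists_sup_seq (x : nat -> R) b : (forall N, x N <= b) ->
  exists s, (forall N, x N <= s) /\ (forall e, 0 < e -> exists N, s - e < x N).
Proof.
move=> xb; have hs : has_sup (range x).
  by split; [exists (x 0%N), 0%N | exists b => _ [N _ <-]].
exists (sup (range x)); split; first by move=> N; apply: sup_upper_bound => //; exists N.
by move=> e e0; have [_ [N _ <-] ?] := sup_adherent e0 hs; exists N.
Qed.

Lemma cvgc_nondecreasing (x : nat -> R) s :
  {homo x : a b / (a <= b)%N >-> a <= b} -> (forall N, x N <= s) ->
  (forall e, 0 < e -> exists N, s - e < x N) -> cvgc (fun N => (x N)%:C) s%:C.
Proof.
move=> xhomo xs xsup e /xsup[N0 h0]; exists N0 => N N0N.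
rewrite -rmorphB normc_real ler0_norm ?subr_le0 //.
by have := xhomo _ _ N0N; lra.
Qed.

(* Completeness of [C]: [Re u + p] and [Im u + p] are nondecreasing and bounded,
   so they converge to their suprema. *)
Lemma cvgc_dominated u (p : nat -> R) s :
  (forall N N', (N <= N')%N -> normc (u N' - u N) <= p N' - p N) ->
  (forall N, p N <= s) -> (forall e, 0 < e -> exists N, s - e < p N) ->
  exists l, cvgc u l /\ forall N, normc (l - u N) <= s - p N.
Proof.
move=> up ps psup.
have phomo : {homo p : a b / (a <= b)%N >-> a <= b}.
  by move=> a b ab; have := up _ _ ab; have := normc_ge0 (u b - u a); lra.
have p_cvg := cvgc_nondecreasing phomo ps psup.
have coord_cvg (P : C -> R) : (forall x y, `|P x - P y| <= normc (x - y)) ->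
    exists a, cvgc (fun N => (P (u N))%:C) a%:C.
  move=> Plip; pose x N := P (u N) + p N.
  have xhomo : {homo x : a b / (a <= b)%N >-> a <= b}.
    move=> a b ab; have := le_trans (Plip (u b) (u a)) (up _ _ ab).
    by rewrite ler_norml /x; lra.
  have [sx [xs xsup]] : exists sx, (forall N, x N <= sx) /\
      (forall e, 0 < e -> exists N, sx - e < x N).
    apply: (@exists_sup_seq x (P (u 0%N) - p 0%N + 2 * s)) => N.
    have := le_trans (Plip (u N) (u 0%N)) (up _ _ (leq0n N)).
    by rewrite ler_norml /x; have := ps N; lra.
  exists (sx - s); rewrite rmorphB.
  have -> : (fun N => (P (u N))%:C) = fun N => (x N)%:C - (p N)%:C.
    by apply: funext => N; rewrite -rmorphB /x addrK.
  exact: cvgcB (cvgc_nondecreasing xhomo xs xsup) p_cvg.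
have [a Re_cvg] := coord_cvg _ (@ler_normc_ReB R).
have [b Im_cvg] := coord_cvg _ (@ler_normc_ImB R).
have u_cvg : cvgc u (a%:C + 'i * b%:C).
  rewrite (_ : u = fun N => (Re (u N))%:C + 'i * (Im (u N))%:C).
    exact: cvgcD Re_cvg (cvgcMl _ Im_cvg).
  by apply: funext => N; rewrite -complexE.
exists (a%:C + 'i * b%:C); split => // N.
apply: (cvgc_le u_cvg (N0 := N)) => N' NN'.
by have := up _ _ NN'; have := ps N'; lra.
Qed.

End ComplexConvergence.

Definition box_sum (V : nmodType) (g N : nat) (F : ('I_g -> nat) -> V) : V :=
  \sum_(k : {ffun 'I_g -> 'I_N}) F (fun m => nat_of_ord (k m)).

Lemma box_sumB_shell (g N N' : nat) : (N <= N')%N ->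
  exists S : {set {ffun 'I_g -> 'I_N'}},
    forall (V : zmodType) (F : ('I_g -> nat) -> V),
      box_sum N' F - box_sum N F =
      \sum_(k : {ffun 'I_g -> 'I_N'} | k \notin S) F (fun m => nat_of_ord (k m)).
Proof.
move=> NN'; pose widen (k : {ffun 'I_g -> 'I_N}) := [ffun m => widen_ord NN' (k m)].
have widen_inj : injective widen.
  move=> a b /ffunP ab; apply/ffunP => m.
  by have := ab m; rewrite !ffunE => /(congr1 val) /= /val_inj.
exists (widen @: [set: _]) => V F.
rewrite /box_sum (bigID (mem (widen @: [set: _]))) /= big_imset /=; last first.
  by move=> a b _ _; apply: widen_inj.
have -> : \sum_(k in [set: {ffun 'I_g -> 'I_N}]) F (fun m => nat_of_ord (widen k m)) =
          \sum_(k : {ffun 'I_g -> 'I_N}) F (fun m => nat_of_ord (k m)).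
  apply: eq_big => [k | k _]; first by rewrite inE.
  by congr F; apply: funext => m; rewrite ffunE.
by rewrite addrC addKr.
Qed.

Lemma box_sumB (V : zmodType) g N (F G : ('I_g -> nat) -> V) :
  box_sum N (fun k => F k - G k) = box_sum N F - box_sum N G.
Proof. by rewrite /box_sum sumrB. Qed.

Lemma box_sumMl (S : pzSemiRingType) g N (a : S) (F : ('I_g -> nat) -> S) :
  box_sum N (fun k => a * F k) = a * box_sum N F.
Proof. by rewrite /box_sum mulr_sumr. Qed.

Lemma box_sum_prod (S : comNzRingType) g N (F : 'I_g -> nat -> S) :
  box_sum N (fun k => \prod_(m < g) F m (k m)) = \prod_(m < g) \sum_(0 <= t < N) F m t.
Proof. by under [RHS]eq_bigr do rewrite big_mkord; rewrite bigA_distr_bigA. Qed.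

Section BoxSums.
Variables (R : realType) (g : nat).
Local Notation C := R[i].
Local Notation K := ('I_g -> nat).

Lemma ler_normc_box_sumB N N' (F : K -> C) (G : K -> R) : (N <= N')%N ->
  (forall k, normc (F k) <= G k) ->
  normc (box_sum N' F - box_sum N F) <= box_sum N' G - box_sum N G.
Proof.
move=> NN' FG; have [S hS] := box_sumB_shell g NN'; rewrite !hS.
by apply: le_trans (ler_normc_sum _ _ _) _; apply: ler_sum.
Qed.

Lemma cvgc_box_sum_abs (F : K -> C) (B : R) :
  (forall N, box_sum N (fun k => normc (F k)) <= B) ->
  exists l, cvgc (fun N => box_sum N F) l.
Proof.
move=> FB; have [s [Fs ssup]] := exists_sup_seq FB.
have F_incr N N' (NN' : (N <= N')%N) := ler_normc_box_sumB NN' (fun k => lexx (normc (F k))).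
by have [l [Fl _]] := cvgc_dominated F_incr Fs ssup; exists l.
Qed.

(* Both iterated limits are within [s - P N N] of the diagonal sum [D N N],
   where [s] is the supremum of the absolute diagonal sums [P N N]. *)
Lemma box_sum_exchange (a : K -> K -> C) (S : K -> C) (B : R) :
  (forall j, cvgc (fun N => box_sum N (fun k => a k j)) (S j)) ->
  (forall N, box_sum N (fun k => box_sum N (fun j => normc (a k j))) <= B) ->
  exists L, cvgc (fun N => box_sum N (fun k => box_sum N (a k))) L /\
            cvgc (fun M => box_sum M S) L.
Proof.
move=> aS aB.
pose D N M := box_sum N (fun k => box_sum M (a k)).
pose P N M := box_sum N (fun k => box_sum M (fun j => normc (a k j))).
have DP N N' M M' : (N <= N')%N -> (M <= M')%N ->
    normc (D N' M' - D N M) <= P N' M' - P N M.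
  move=> NN' MM'; rewrite -(subrK (D N' M) (D N' M')) -addrA.
  rewrite -(subrK (P N' M) (P N' M')) -[X in _ <= X]addrA.
  apply: le_trans (le_normcD _ _) _; apply: lerD; last first.
    by apply: ler_normc_box_sumB => // k; apply: ler_normc_sum.
  rewrite /D /P -!box_sumB; apply: le_trans (ler_normc_sum _ _ _) _.
  by apply: ler_sum => k _; apply: ler_normc_box_sumB.
have [s [Ps ssup]] := exists_sup_seq aB.
have [L [DL DLs]] := cvgc_dominated (fun N N' NN' => DP _ _ _ _ NN' NN') Ps ssup.
exists L; split => //.
have DT M : cvgc (fun N => D N M) (box_sum M S).
  rewrite (_ : (fun N => D N M) = fun N => box_sum M (fun j => box_sum N (a^~ j))).
    exact: cvgc_sum.
  by apply: funext => N; rewrite /D /box_sum exchange_big.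
have TD N M : (N <= M)%N -> normc (box_sum M S - D N N) <= s - P N N.
  move=> NM; apply: (cvgc_le (DT M) (N0 := M)) => N' MN' /=.
  have := DP _ _ _ _ (leq_trans NM MN') NM; have : P N' N' <= s := Ps N'.
  have := normc_ge0 (D N' N' - D N' M); have := DP _ _ _ _ (leqnn N') MN'; lra.
move=> e e0; have [N hN] : exists N, s - e / 2 < P N N by apply/ssup/divr_gt0.
exists N => M NM /=; rewrite -(subrK (D N N) (box_sum M S)) -addrA (splitr e).
apply: le_lt_trans (le_normcD _ _) _; rewrite [normc (D N N - L)]normc_distC.
by have := TD _ _ NM; have := DLs N; lra.
Qed.

End BoxSums.

Lemma exprDn_partial (S : comNzRingType) (a b : S) k N : (k < N)%N ->
  \sum_(0 <= t < N) 'C(k, t)%:R * a ^+ (k - t) * b ^+ t = (a + b) ^+ k.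
Proof.
move=> kN; rewrite (big_cat_nat (leq0n k.+1) kN) /= [X in _ + X]big1_seq ?addr0.
  by rewrite big_mkord exprDn; apply: eq_bigr => t _; rewrite -mulrA mulr_natl.
move=> t /andP[_]; rewrite mem_index_iota => /andP[kt _].
by rewrite bin_small // !mul0r.
Qed.

Lemma ler_exprDn_partial (R : realDomainType) (a b : R) k N : 0 <= a -> 0 <= b ->
  \sum_(0 <= t < N) 'C(k, t)%:R * a ^+ (k - t) * b ^+ t <= (a + b) ^+ k.
Proof.
move=> a0 b0; rewrite -(exprDn_partial a b (leq_maxr N k.+1)).
rewrite (big_cat_nat (leq0n N) (leq_maxl N k.+1)) /= lerDl.
by apply: sumr_ge0 => t _; rewrite !mulr_ge0 ?exprn_ge0.
Qed.

Lemma expn_mul_bin_le (n k j : nat) :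
  (k.+1 ^ n * 'C(k, j) <= n`! * j.+1 ^ n * 'C(k + n, j + n))%N.
Proof.
elim: n => [|n IH]; first by rewrite !expn0 fact0 !addn0 !mul1n.
have absorption := mul_bin_diag (k + n).+1 (j + n); rewrite /= in absorption.
rewrite expnS factS !addnS -mulnA.
set Q := (n`! * j.+1 ^ n)%N in IH *.
set b := 'C(k + n, j + n) in IH absorption *.
set b' := 'C((k + n).+1, (j + n).+1) in absorption *.
apply: (@leq_trans (k.+1 * (Q * b))); first by rewrite leq_mul2l IH orbT.
apply: (@leq_trans ((k + n).+1 * (Q * b))); first by rewrite leq_mul2r ltnS leq_addr orbT.
rewrite mulnCA absorption.
have -> : (n.+1 * n`! * j.+1 ^ n.+1 * b' = Q * ((n.+1 * j.+1) * b'))%N.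
  by rewrite /Q expnS; ring.
by rewrite leq_mul2l leq_mul2r (_ : (j + n).+1 <= n.+1 * j.+1)%N ?orbT //; nia.
Qed.

Section NegativeBinomial.
Variable R : realFieldType.
Variable rho : R.
Hypotheses (rho_ge0 : 0 <= rho) (rho_lt1 : rho < 1).

(* Double induction: by Pascal's rule the partial sums satisfy
   [S_(m+1) (N+1) = rho S_(m+1) N + S_m N], and [X = rho X + 1]. *)
Lemma negbin_partial_sum_le m N :
  \sum_(0 <= t < N) 'C(t, m)%:R * rho ^+ (t - m) <= ((1 - rho)^-1) ^+ m.+1.
Proof.
set X := (1 - rho)^-1.
have X0 : 0 < X by rewrite invr_gt0 subr_gt0.
have rhoX : rho * X + 1 = X by rewrite /X; field; rewrite gt_eqF // subr_gt0.
elim: m N => [|m IH] N.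
  rewrite expr1; elim: N => [|N IHN]; first by rewrite big_geq // ltW.
  rewrite big_nat_recl // bin0 subn0 expr0 mulr1.
  have -> : \sum_(0 <= i < N) 'C(i.+1, 0)%:R * rho ^+ (i.+1 - 0) =
            rho * \sum_(0 <= i < N) 'C(i, 0)%:R * rho ^+ (i - 0).
    by rewrite mulr_sumr; apply: eq_bigr => i _; rewrite !bin0 !subn0 exprS mulrCA.
  by have := ler_wpM2l rho_ge0 IHN; lra.
elim: N => [|N IHN]; first by rewrite big_geq // exprn_ge0 // ltW.
rewrite big_nat_recl // bin0n /= mul0r add0r.
have -> : \sum_(0 <= i < N) 'C(i.+1, m.+1)%:R * rho ^+ (i.+1 - m.+1) =
          rho * \sum_(0 <= i < N) 'C(i, m.+1)%:R * rho ^+ (i - m.+1)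
          + \sum_(0 <= i < N) 'C(i, m)%:R * rho ^+ (i - m).
  rewrite mulr_sumr -big_split /=; apply: eq_bigr => i _.
  rewrite binS natrD mulrDl subSS; congr (_ + _).
  have [im | mi] := leqP i m; first by rewrite bin_small ?ltnS // !mul0r mulr0.
  by rewrite mulrCA -exprS subnSK.
have := IH N; have := ler_wpM2l rho_ge0 IHN.
have : X ^+ m.+2 = rho * X ^+ m.+2 + X ^+ m.+1.
  by rewrite {1}exprSr -{2}rhoX mulrDr mulr1 mulrCA -exprSr.
lra.
Qed.

(* By [expn_mul_bin_le] the sum is dominated by a tail of the negative binomial
   series of order [j + n]. *)
Lemma weighted_negbin_partial_sum_le n j N :
  \sum_(0 <= k < N) k.+1%:R ^+ n * 'C(k, j)%:R * rho ^+ (k - j) * (1 - rho) ^+ j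
  <= n`!%:R * j.+1%:R ^+ n * ((1 - rho)^-1) ^+ n.+1.
Proof.
set r := 1 - rho; set X := r^-1.
have r0 : 0 < r by rewrite /r subr_gt0.
set Q : R := (n`! * j.+1 ^ n)%N%:R.
pose F t := 'C(t, j + n)%:R * rho ^+ (t - (j + n)).
have F0 t : 0 <= F t by rewrite /F mulr_ge0 // exprn_ge0.
apply: (@le_trans _ _ (\sum_(0 <= k < N) Q * r ^+ j * F (k + n)%N)).
  apply: ler_sum => k _.
  have -> : k.+1%:R ^+ n * 'C(k, j)%:R * rho ^+ (k - j) * r ^+ j =
            (k.+1 ^ n * 'C(k, j))%N%:R * (rho ^+ (k - j) * r ^+ j).
    by rewrite natrM natrX !mulrA.
  have -> : Q * r ^+ j * F (k + n)%N =
            (n`! * j.+1 ^ n * 'C(k + n, j + n))%N%:R * (rho ^+ (k - j) * r ^+ j).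
    by rewrite /F /Q subnDr !natrM; ring.
  apply: ler_wpM2r; first by rewrite mulr_ge0 ?exprn_ge0 // ltW.
  by rewrite ler_nat expn_mul_bin_le.
have shifted_le : \sum_(0 <= k < N) F (k + n)%N <= X ^+ (j + n).+1.
  have shift : \sum_(n <= t < n + N) F t = \sum_(0 <= k < N) F (k + n)%N.
    by rewrite -{1}(add0n n) big_addn addKn.
  have := negbin_partial_sum_le (j + n) (n + N).
  rewrite (big_cat_nat (leq0n n) (leq_addr N n)) /= -/(F _) shift.
  have : 0 <= \sum_(0 <= t < n) F t by apply: sumr_ge0.
  lra.
rewrite -mulr_sumr; apply: le_trans (ler_wpM2l _ shifted_le) _.
  by rewrite mulr_ge0 // exprn_ge0 // ltW.
rewrite -addnS exprD mulrA -[Q * _ * _]mulrA -exprMn mulfV ?gt_eqF // expr1n mulr1.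
by rewrite /Q natrM natrX.
Qed.

End NegativeBinomial.

Lemma expR_mul_exp2_ge1 (R : realType) k : 1 <= expR k%:R * 2 ^+ k :> R.
Proof.
apply: mulr_ege1; last by apply: exprn_ege1; lra.
by apply: le_trans (expR_ge1Dx _); rewrite lerDl.
Qed.

Section Recentering.
Variables (R : realType) (g : nat) (A : R) (n : 'I_g -> nat).
Variables (f : ('I_g -> nat) -> R[i]) (c : 'I_g -> R[i]).
Hypothesis A_ge1 : 1 <= A.
Hypothesis f_le : forall k, normc (f k) <= A * \prod_(m < g) (k m).+1%:R ^+ n m.
Hypothesis c_lt1 : forall m, normc (c m) < 1.
Local Notation C := R[i].
Local Notation K := ('I_g -> nat).
Local Notation rho m := (normc (c m)).
Local Notation r m := (1 - normc (c m)).

Let A_ge0 : 0 <= A. Proof. exact: le_trans ler01 A_ge1. Qed.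
Let r_gt0 m : 0 < r m. Proof. by rewrite subr_gt0. Qed.
Let r_ge0 m : 0 <= r m. Proof. exact: ltW. Qed.
Let r_le1 m : r m <= 1. Proof. by rewrite lerBlDr lerDl normc_ge0. Qed.

(* The contribution of [f_k z^k] to the coefficient of [y^j] once
   [z_m = c_m + y_m r_m] is substituted and expanded binomially. *)
Definition recenter_term (k j : K) : C :=
  f k * \prod_(m < g) ('C(k m, j m)%:R * c m ^+ (k m - j m) * (r m)%:C ^+ j m).

Lemma normc_recenter_term k j : normc (recenter_term k j) =
  normc (f k) * \prod_(m < g) ('C(k m, j m)%:R * rho m ^+ (k m - j m) * r m ^+ j m).
Proof.
rewrite normcM normc_prod; congr (_ * _); apply: eq_bigr => m _.
by rewrite !normcM !normcX normc_nat normc_real ger0_norm.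
Qed.

Definition coef_bound (j : K) : R :=
  A * \prod_(m < g) ((n m)`!%:R * (j m).+1%:R ^+ n m * (r m)^-1 ^+ (n m).+1).

Lemma box_sum_normc_recenter_term_le j N :
  box_sum N (fun k => normc (recenter_term k j)) <= coef_bound j.
Proof.
pose F m t := t.+1%:R ^+ n m * 'C(t, j m)%:R * rho m ^+ (t - j m) * r m ^+ j m.
have F_ge0 m t : 0 <= F m t by rewrite !mulr_ge0 ?exprn_ge0 ?normc_ge0 ?r_ge0.
have term_le (k : K) : normc (recenter_term k j) <= A * \prod_(m < g) F m (k m).
  have -> : \prod_(m < g) F m (k m) = \prod_(m < g) (k m).+1%:R ^+ n m *
      \prod_(m < g) ('C(k m, j m)%:R * rho m ^+ (k m - j m) * r m ^+ j m).
    by rewrite -big_split; apply: eq_bigr => m _; rewrite /F /= !mulrA.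
  rewrite normc_recenter_term mulrA; apply: ler_wpM2r; last exact: f_le.
  by apply: prodr_ge0 => m _; rewrite !mulr_ge0 ?exprn_ge0 ?normc_ge0.
apply: (@le_trans _ _ (box_sum N (fun k => A * \prod_(m < g) F m (k m)))).
  by apply: ler_sum => k _; apply: term_le.
rewrite box_sumMl box_sum_prod; apply: ler_wpM2l => //.
apply: ler_prod => m _; rewrite sumr_ge0 //=.
exact: weighted_negbin_partial_sum_le (normc_ge0 _) (c_lt1 m) (n m) (j m) N.
Qed.

Definition recentered_coef (j : K) : C :=
  projT1 (cid (cvgc_box_sum_abs (box_sum_normc_recenter_term_le j))).

Lemma recentered_coef_cvg j :
  cvgc (fun N => box_sum N (fun k => recenter_term k j)) (recentered_coef j).
Proof. exact: projT2 (cid (cvgc_box_sum_abs (box_sum_normc_recenter_term_le j))). Qed.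

Lemma normc_recentered_coef_le j : normc (recentered_coef j) <= coef_bound j.
Proof.
have := cvgc_le (x := 0) (b := coef_bound j) (N0 := 0) (recentered_coef_cvg j).
rewrite subr0; apply => N _; rewrite subr0.
exact: le_trans (ler_normc_sum _ _ _) (box_sum_normc_recenter_term_le j N).
Qed.

Lemma prod_r_expN_ge1 : 1 <= \prod_(m < g) r m ^- (n m + 2).
Proof.
elim/big_ind: _ => // [x y|m _]; first exact: mulr_ege1.
rewrite invr_ge1 ?unitfE ?gt_eqF ?exprn_gt0 //.
exact: exprn_ile1.
Qed.

Lemma recentered_const_ge1 :
  1 <= (mfact n)%:R * A * expR ((g + mnorm1 n)%:R) * 2 ^+ (g + mnorm1 n)
       * \prod_(m < g) r m ^- (n m + 2).
Proof.
have fact_ge1 : 1 <= (mfact n)%:R :> R by rewrite ler1n prodn_gt0 // => m; exact: fact_gt0.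
rewrite -!mulrA; apply: mulr_ege1 => //; apply: mulr_ege1 => //.
by rewrite mulrA; apply: mulr_ege1; [exact: expR_mul_exp2_ge1 | exact: prod_r_expN_ge1].
Qed.

Lemma coef_bound_le j :
  coef_bound j <= (mfact n)%:R * A * expR ((g + mnorm1 n)%:R) * 2 ^+ (g + mnorm1 n)
       * \prod_(m < g) r m ^- (n m + 2) * \prod_(m < g) (j m).+1%:R ^+ (n m).+1.
Proof.
apply: (@le_trans _ _ (A * \prod_(m < g) ((n m)`!%:R *
   (r m ^- (n m + 2) * (j m).+1%:R ^+ (n m).+1)))).
  apply: ler_wpM2l => //; apply: ler_prod => m _.
  have r_inv_ge1 : 1 <= (r m)^-1.
    by rewrite invr_ge1 ?unitfE ?gt_eqF.
  have j_ge1 : 1 <= (j m).+1%:R :> R by rewrite ler1n.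
  apply/andP; split; first by rewrite !mulr_ge0 ?exprn_ge0 ?invr_ge0.
  rewrite -mulrA; apply: ler_wpM2l => //; rewrite mulrC -exprVn.
  by apply: ler_pM; rewrite ?exprn_ge0 ?invr_ge0 ?ler_weXn2l ?addn2.
rewrite big_split big_split /= -natr_prod.
set M := (\prod_(m < g) (n m)`!)%:R; set P := \prod_(m < g) _ ^- _.
set J := \prod_(m < g) _ ^+ _.
rewrite /mfact -/M (_ : M * A * _ * _ * P * J = A * (M * (P * J)) *
    (expR ((g + mnorm1 n)%:R) * 2 ^+ (g + mnorm1 n))); last by ring.
apply: ler_peMr; last exact: expR_mul_exp2_ge1.
rewrite !mulr_ge0 ?(le_trans ler01 prod_r_expN_ge1) //.
by apply: prodr_ge0 => m _; rewrite exprn_ge0.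
Qed.

Lemma recenter_double_series_bounded (y : 'I_g -> C) : (forall m, normc (y m) < 1) ->
  exists B, forall N,
    box_sum N (fun k => box_sum N (fun j => normc (recenter_term k j * mpow y j))) <= B.
Proof.
move=> y_lt1; pose q m := rho m + r m * normc (y m).
have q_ge0 m : 0 <= q m by rewrite addr_ge0 ?normc_ge0 ?mulr_ge0 ?normc_ge0 ?r_ge0.
have q_lt1 m : q m < 1.
  by have := y_lt1 m; rewrite -(ltr_pM2l (r_gt0 m)) mulr1 /q; lra.
have row_le (k : K) N :
    box_sum N (fun j => normc (recenter_term k j * mpow y j)) <=
    A * \prod_(m < g) ((k m).+1%:R ^+ n m * q m ^+ k m).
  pose F m t := 'C(k m, t)%:R * rho m ^+ (k m - t) * (r m * normc (y m)) ^+ t.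
  have F_ge0 m t : 0 <= F m t.
    by rewrite /F !mulr_ge0 ?exprn_ge0 ?mulr_ge0 ?normc_ge0 ?r_ge0.
  rewrite (_ : (fun j => _) = fun j => normc (f k) * \prod_(m < g) F m (j m)).
    rewrite box_sumMl box_sum_prod big_split /= mulrA.
    apply: ler_pM; rewrite ?normc_ge0 ?f_le //.
      by apply: prodr_ge0 => m _; apply: sumr_ge0.
    apply: ler_prod => m _; rewrite sumr_ge0 //=.
    exact: ler_exprDn_partial (normc_ge0 _) (mulr_ge0 (r_ge0 m) (normc_ge0 _)).
  apply: funext => j; rewrite normcM normc_recenter_term normc_mpow.
  rewrite -mulrA -big_split; congr (_ * _); apply: eq_bigr => m _.
  by rewrite /F exprMn mulrA.
exists (A * \prod_(m < g) ((n m)`!%:R * (1 - q m)^-1 ^+ (n m).+1)) => N.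
apply: (@le_trans _ _ (box_sum N (fun k => A * \prod_(m < g) ((k m).+1%:R ^+ n m * q m ^+ k m)))).
  by apply: ler_sum => k _; apply: row_le.
rewrite box_sumMl (box_sum_prod N (fun m t => t.+1%:R ^+ n m * q m ^+ t)).
apply: ler_wpM2l => //; apply: ler_prod => m _.
rewrite sumr_ge0 => [|t _]; last by rewrite mulr_ge0 ?exprn_ge0.
have := weighted_negbin_partial_sum_le (q_ge0 m) (q_lt1 m) (n m) 0 N.
by rewrite expr1n mulr1; under eq_bigr do rewrite bin0 subn0 expr0 !mulr1.
Qed.

Lemma recenter_term_expand (y : 'I_g -> C) (k : K) N : (forall m, (k m < N)%N) ->
  f k * mpow (fun m => c m + y m * (r m)%:C) k =
  box_sum N (fun j => recenter_term k j * mpow y j).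
Proof.
move=> k_lt; pose F m t := 'C(k m, t)%:R * c m ^+ (k m - t) * (y m * (r m)%:C) ^+ t.
rewrite (_ : (fun j => _) = fun j => f k * \prod_(m < g) F m (j m)).
  rewrite box_sumMl box_sum_prod; congr (_ * _); apply: eq_bigr => m _.
  exact/esym/exprDn_partial.
apply: funext => j; rewrite /recenter_term /mpow -mulrA -big_split.
by congr (_ * _); apply: eq_bigr => m _; rewrite /F /= exprMn; ring.
Qed.

Lemma recenter_series_cvg (y : 'I_g -> C) j :
  cvgc (fun N => box_sum N (fun k => recenter_term k j * mpow y j))
       (recentered_coef j * mpow y j).
Proof.
rewrite mulrC (_ : (fun N => _) = fun N => mpow y j * box_sum N (recenter_term^~ j)).
  exact/cvgcMl/recentered_coef_cvg.
by apply: funext => N; rewrite -box_sumMl; apply: eq_bigr => k _; rewrite mulrC.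
Qed.

End Recentering.

Theorem mainTheorem14 (R : realType) (g : nat) (hg : (1 <= g)%N) (A : R)
    (n : 'I_g -> nat) (f : ('I_g -> nat) -> R[i])
    (hf : order_of_magnitude f A n)
    (c : 'I_g -> R[i]) (hc : polydisc (fun _ => 0) 1 c) :
  let Ac : R := (mfact n)%:R * A * expR ((g + mnorm1 n)%:R) * 2 ^+ (g + mnorm1 n)
                * \prod_(m < g) (1 - normc (c m)) ^- (n m + 2) in
  exists Fc : ('I_g -> nat) -> R[i],
    order_of_magnitude Fc Ac (fun m => (n m).+1) /\
    forall y : 'I_g -> R[i], polydisc (fun _ => 0) 1 y ->
      exists l : R[i],
        pseries_sum f (fun m => c m + y m * (1 - normc (c m))%:C) l /\
        pseries_sum Fc y l.
Proof.
move=> Ac; case: hf => [A_ge1 [_ f_le]].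
have c_lt1 m : normc (c m) < 1 by have := hc m; rewrite subr0.
exists (recentered_coef A_ge1 f_le c_lt1); split.
  split; first exact: recentered_const_ge1.
  split=> // j; apply: le_trans (normc_recentered_coef_le _ _ _ j) _.
  exact: coef_bound_le.
move=> y hy; have y_lt1 m : normc (y m) < 1 by have := hy m; rewrite subr0.
have [B HB] := recenter_double_series_bounded A_ge1 f_le c_lt1 y_lt1.
have [L [diagL coefL]] := box_sum_exchange (recenter_series_cvg A_ge1 f_le c_lt1 y) HB.
exists L; split => //; move: diagL; congr cvgc; apply: funext => N.
apply: eq_bigr => k _; exact/esym/(recenter_term_expand f c y (fun m => ltn_ord (k m))).
Qed.
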